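(* Under the standing assumptions below, the Bellman operator $\mathcal B$ maps $\mathcal N$ into itself: $\mathcal B(\mathcal N)\subset\mathcal N$.
   Context: Setup. Let $\mathcal S$ be a finite set and $(s_t)_{t\ge0}$ a Markov chain on $\mathcal S$ with transition probabilities $\pi(s'|s)>0$ for all $s,s'\in\mathcal S$; $\mathbb E_{s_t}$ denotes expectation over future shocks conditional on the history $s^t=(s_0,\dots,s_t)$. Let $\mathcal A\subset\mathbb R^n$ be a finite set, $\mathcal X\subseteq\mathbb R^m$ a countable set, $\zeta:\mathcal X\times\mathcal A\times\mathcal S\to\mathcal X$, $p:\mathcal X\times\mathcal A\times\mathcal S\to\mathbb R$, $r,g^1,\dots,g^I:\mathcal X\times\mathcal A\times\mathcal S\to\mathbb R$ bounded functions, $\bar g^1,\dots,\bar g^I\in\mathbb R$ and $\beta\in(0,1)$. A plan is a family $a=(a(s^t))_{t\ge0,\,s^t\in\mathcal S^{t+1}}$ with $a(s^t)\in\mathcal A$; given $x_0$ it induces states $x(s^0)=x_0$, $x(s^{t+1})=\zeta(x(s^t),a(s^t),s_t)$. Let $\tilde{\mathcal A}(x,s)=\{a\in\mathcal A:p(x,a,s)\ge0\}$ and $\tilde{\mathcal A}^\infty(x_0)$ the set of plans with $a(s^t)\in\tilde{\mathcal A}(x(s^t),s_t)$ for all $t,s^t$. A plan is feasible for $(x_0,s_0)$ if it lies in $\tilde{\mathcal A}^\infty(x_0)$ and $\mathbb E_{s_t}\sum_{n\ge0}\beta^ng^i(x(s^{t+n}),a(s^{t+n}),s_{t+n})\ge\bar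 g^i$ for all $t,s^t,i$. Standing assumption: for every $(x_0,s_0)$ a feasible plan exists. Function spaces. Let $L=(\|r\|_\infty+\sum_{i=1}^I\|g^i\|_\infty)/(1-\beta)$, $B(k)=\{\gamma\in\mathbb R^I_+:\|\gamma\|_\infty\le k\}$, and enumerate $\mathcal S=\{s_1,\dots,s_{|\mathcal S|}\}$, $\mathcal X=\{x_1,x_2,\dots\}$. $\mathcal M$ is the set of $F:\mathbb R^I_+\times\mathcal X\times\mathcal S\to\mathbb R$ with $F(\cdot,x,s)\in L^\infty(B(k))$ for all $k\in\mathbb N_+$, $x,s$, and $\|F\|_{\mathcal M}:=\sum_{i}2^{-i}\sum_j2^{-j}\sum_{k\ge1}2^{-k}\|F(\cdot,x_j,s_i)\|_{L^\infty(B(k))}<\infty$. $\mathcal N\subset\mathcal M$ is the set of $F\in\mathcal M$ such that for all $x,s$: (i) $F(\cdot,x,s)$ is convex; (ii) $|F(\gamma_1,x,s)-F(\gamma_2,x,s)|\le L\|\gamma_1-\gamma_2\|_1$; (iii) $F(\gamma,x,s)\ge v^0+\sum_i\gamma^iv^i$ for every feasible plan for $(x,s)$, where $v^0=\mathbb E_{s}\sum_t\beta^tr(x(s^t),a(s^t),s_t)$, $v^i=\mathbb E_s\sum_t\beta^tg^i(x(s^t),a(s^t),s_t)$ (with $x_0=x,s_0=s$); (iv) $F(\gamma,x,s)\le(1+\sum_i\gamma^i)L$. Bellman operator: for $F:\mathbb R^I_+\times\mathcal X\times\mathcal S\to\mathbb R$, $\mathcal B(F)(\gamma,x,s)=\inf_{\lambda\in\mathbb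 R^I_+}\sup_{a\in\tilde{\mathcal A}(x,s)}\big[r(x,a,s)+\sum_i(\gamma^ig^i(x,a,s)+\lambda^i(g^i(x,a,s)-\bar g^i))+\beta\mathbb E_sF(\gamma+\lambda,\zeta(x,a,s),s')\big]$, where $\mathbb E_s$ is expectation over $s'\sim\pi(\cdot|s)$. *)

From HB Require Import structures.
From mathcomp Require Import all_boot all_order all_algebra.
From mathcomp Require Import all_classical all_reals all_analysis.
Import Order.TTheory GRing.Theory Num.Theory.
Set Implicit Arguments. Unset Strict Implicit. Unset Printing Implicit Defensive.
Local Open Scope ring_scope.
Local Open Scope classical_set_scope.

(* Conventions.
   - S : finType (shocks), A : finType (actions), X : countType (endogenous
     states), I : nat (number of constraints), constraint indices 'I_I.
   - gamma, lambda in R^I are functions 'I_I -> R; R^I_+ is [nonneg].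
   - A history s^t = (s_0, ..., s_t) for a FIXED initial shock s0 is
     represented by the list h = [:: s_t; ...; s_1] of later shocks
     (newest first); the current shock is [head s0 h].
   - A plan for initial shock s0 is a map [seq S -> A] on such histories. *)

Definition nonneg (R : realType) (I : nat) (gam : 'I_I -> R) : Prop :=
  forall i, 0 <= gam i.

Definition ballB (R : realType) (I : nat) (k : nat) : set ('I_I -> R) :=
  [set gam | nonneg gam /\ forall i, gam i <= k%:R].

Fixpoint state (S A X : Type) (zeta : X -> A -> S -> X)
    (x0 : X) (s0 : S) (a : seq S -> A) (h : seq S) : X :=
  match h with
  | [::] => x0
  | _ :: h' => zeta (state zeta x0 s0 a h') (a h') (head s0 h')
  end.

(* cexp pi s0 n f h = E_{s_t}[ f(s^{t+n}) ], conditional expectation n steps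
   ahead given the history h = s^t *)
Fixpoint cexp (R : realType) (S : finType) (pi : S -> S -> R) (s0 : S)
    (n : nat) (f : seq S -> R) (h : seq S) : R :=
  match n with
  | 0 => f h
  | n'.+1 => \sum_(s' : S) pi (head s0 h) s' * cexp pi s0 n' f (s' :: h)
  end.

Definition disc_value (R : realType) (S A : finType) (X : Type)
    (pi : S -> S -> R) (zeta : X -> A -> S -> X) (beta : R)
    (x0 : X) (s0 : S) (a : seq S -> A) (u : X -> A -> S -> R) (h : seq S) : R :=
  limn (fun N => \sum_(0 <= n < N)
     (beta ^+ n * cexp pi s0 n
        (fun h' => u (state zeta x0 s0 a h') (a h') (head s0 h')) h)).

Definition feasible (R : realType) (S A : finType) (X : Type) (I : nat)
    (pi : S -> S -> R) (zeta : X -> A -> S -> X) (p : X -> A -> S -> R)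
    (g : 'I_I -> X -> A -> S -> R) (gbar : 'I_I -> R) (beta : R)
    (x0 : X) (s0 : S) (a : seq S -> A) : Prop :=
  (forall h, 0 <= p (state zeta x0 s0 a h) (a h) (head s0 h)) /\
  (forall h i, gbar i <= disc_value pi zeta beta x0 s0 a (g i) h).

Definition supnorm (R : realType) (S A X : Type) (f : X -> A -> S -> R) : R :=
  sup [set `|f t.1.1 t.1.2 t.2| | t in [set: X * A * S]].

Definition Lconst (R : realType) (S A X : Type) (I : nat)
    (r : X -> A -> S -> R) (g : 'I_I -> X -> A -> S -> R) (beta : R) : R :=
  (supnorm r + \sum_(i < I) supnorm (g i)) / (1 - beta).

(* ||F||_M, as an extended real; x_j is indexed by j = pickle x + 1 and
   s_i by i = enum_rank s + 1.  The L^oo(B(k)) norm is taken as the sup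
   over B(k). *)
Definition normM (R : realType) (S : finType) (X : countType) (I : nat)
    (F : ('I_I -> R) -> X -> S -> R) : \bar R :=
  (\sum_(s : S) ((2%:R^-1) ^+ (enum_rank s).+1)%:E *
     \esum_(x in [set: X]) (((2%:R^-1) ^+ (pickle x).+1)%:E *
        \sum_(1 <= k <oo) (((2%:R^-1) ^+ k)%:E *
            ereal_sup [set (`|F gam x s|)%:E | gam in @ballB R I k])))%E.

Definition inM (R : realType) (S : finType) (X : countType) (I : nat)
    (F : ('I_I -> R) -> X -> S -> R) : Prop :=
  (normM F < +oo)%E.

Definition inN (R : realType) (S A : finType) (X : countType) (I : nat)
    (pi : S -> S -> R) (zeta : X -> A -> S -> X) (p r : X -> A -> S -> R)
    (g : 'I_I -> X -> A -> S -> R) (gbar : 'I_I -> R) (beta : R)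
    (F : ('I_I -> R) -> X -> S -> R) : Prop :=
  inM F /\
  forall (x : X) (s : S),
  [/\
      (forall (g1 g2 : 'I_I -> R) (t : R), nonneg g1 -> nonneg g2 ->
          0 <= t -> t <= 1 ->
          F (fun i => t * g1 i + (1 - t) * g2 i) x s
            <= t * F g1 x s + (1 - t) * F g2 x s),
      (forall (g1 g2 : 'I_I -> R), nonneg g1 -> nonneg g2 ->
          `|F g1 x s - F g2 x s|
            <= Lconst r g beta * \sum_(i < I) `|g1 i - g2 i|),
      (* (iii) lower bound by values of feasible plans *)
      (forall (a : seq S -> A) (gam : 'I_I -> R),
          feasible pi zeta p g gbar beta x s a -> nonneg gam ->
          disc_value pi zeta beta x s a r [::]
            + \sum_(i < I) gam i * disc_value pi zeta beta x s a (g i) [::]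
            <= F gam x s) &
      (* (iv) upper bound *)
      (forall gam : 'I_I -> R, nonneg gam ->
          F gam x s <= (1 + \sum_(i < I) gam i) * Lconst r g beta)].

Definition Bop (R : realType) (S A : finType) (X : Type) (I : nat)
    (pi : S -> S -> R) (zeta : X -> A -> S -> X) (p r : X -> A -> S -> R)
    (g : 'I_I -> X -> A -> S -> R) (gbar : 'I_I -> R) (beta : R)
    (F : ('I_I -> R) -> X -> S -> R) (gam : 'I_I -> R) (x : X) (s : S)
    : \bar R :=
  ereal_inf
    [set ereal_sup
       [set (r x a s
             + \sum_(i < I) (gam i * g i x a s + lam i * (g i x a s - gbar i))
             + beta * \sum_(s' : S)
                 pi s s' * F (fun i => gam i + lam i) (zeta x a s) s')%:E
        | a in [set a : A | 0 <= p x a s]]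
     | lam in [set lam : 'I_I -> R | nonneg lam]].

From HB Require Import structures.
From mathcomp Require Import all_boot all_order all_algebra.
From mathcomp Require Import all_classical all_reals all_analysis.
From mathcomp Require Import ring lra.
Import Order.TTheory GRing.Theory Num.Theory.
Import numFieldNormedType.Exports.
Set Implicit Arguments. Unset Strict Implicit. Unset Printing Implicit Defensive.
Local Open Scope ring_scope.
Local Open Scope classical_set_scope.

(* For gamma >= 0, B(F)(gamma) is an infimum over multipliers lambda >= 0 of a
   finite maximum over admissible actions a of the Lagrangian
     Phi(gamma, lambda, a) = r + sum_i (gamma^i g^i + lambda^i (g^i - gbar^i))
                             + beta E F(gamma + lambda, zeta, s').
   A feasible plan splits into its first action and its continuation plans,
   which are again feasible; property (iii) of F at the continuations gives
   Phi(gamma, lambda, a_0) >= v^0 + sum_i gamma^i v^i, since the remainder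
   sum_i lambda^i (v^i - gbar^i) is nonnegative.  Hence B(F) is finite and
   satisfies (iii); taking lambda = 0 gives (iv).  Phi is L-Lipschitz in gamma
   (|g^i| <= (1 - beta) L and F is L-Lipschitz) and jointly convex in
   (gamma, lambda), and both properties survive the max over a and the inf
   over lambda.  Finally |B(F)(gamma)| <= (1 + sum_i gamma^i) L makes the
   weighted series defining ||B(F)||_M converge. *)

Section histories.
Variables (R : realType) (S A : finType) (X : Type) (pi : S -> S -> R)
  (zeta : X -> A -> S -> X) (beta : R).

(* Histories are stored newest first, so the continuation of a plan after the
   first shock s' sees the histories of the original plan with s' appended. *)
Definition shift_plan (a : seq S -> A) (s' : S) : seq S -> A :=
  fun h => a (h ++ [:: s']).

Lemma head_cat1 (s0 s' : S) h : head s0 (h ++ [:: s']) = head s' h.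
Proof. by case: h. Qed.

Lemma state_shift x0 s0 a s' h :
  state zeta x0 s0 a (h ++ [:: s']) =
  state zeta (zeta x0 (a [::]) s0) s' (shift_plan a s') h.
Proof. by elim: h => [|c h IH] //=; rewrite IH head_cat1. Qed.

Lemma cexp_shift s0 s' n (f : seq S -> R) h :
  cexp pi s0 n f (h ++ [:: s']) = cexp pi s' n (fun h' => f (h' ++ [:: s'])) h.
Proof.
elim: n h => [|n IH] h //=; rewrite head_cat1.
by apply: eq_bigr => c _; rewrite -IH.
Qed.

Lemma eq_cexp s0 n (f f' : seq S -> R) h :
  f =1 f' -> cexp pi s0 n f h = cexp pi s0 n f' h.
Proof.
by move=> ff'; elim: n h => [|n IH] h //=; apply: eq_bigr => c _; rewrite IH.
Qed.

Lemma disc_value_shift x0 s0 a s' (u : X -> A -> S -> R) h :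
  disc_value pi zeta beta (zeta x0 (a [::]) s0) s' (shift_plan a s') u h =
  disc_value pi zeta beta x0 s0 a u (h ++ [:: s']).
Proof.
rewrite /disc_value; do 2 f_equal; apply/funext => N; apply: eq_bigr => n _.
rewrite cexp_shift; congr (_ * _); apply: eq_cexp => h'.
by rewrite /shift_plan state_shift head_cat1.
Qed.

Lemma feasible_shift (p : X -> A -> S -> R) (I : nat)
    (g : 'I_I -> X -> A -> S -> R) gbar x0 s0 a s' :
  feasible pi zeta p g gbar beta x0 s0 a ->
  feasible pi zeta p g gbar beta (zeta x0 (a [::]) s0) s' (shift_plan a s').
Proof.
move=> [p_ge0 g_ge]; split=> [h|h i]; last by rewrite disc_value_shift.
by have := p_ge0 (h ++ [:: s']); rewrite state_shift head_cat1.
Qed.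

Hypothesis pi_ge0 : forall s s', 0 <= pi s s'.
Hypothesis pi_sum1 : forall s, \sum_(s' : S) pi s s' = 1.

Lemma cexp_norm_le s0 n (f : seq S -> R) M h :
  (forall h, `|f h| <= M) -> `|cexp pi s0 n f h| <= M.
Proof.
move=> fM; elim: n h => [|n IH] h //=.
apply: le_trans (ler_norm_sum _ _ _) _.
rewrite -[leRHS]mul1r -(pi_sum1 (head s0 h)) mulr_suml; apply: ler_sum => c _.
by rewrite normrM ger0_norm // ler_wpM2l.
Qed.

End histories.

Lemma series_geometric_le (R : realFieldType) (a z : R) N :
  0 <= a -> 0 <= z -> z < 1 -> series (geometric a z) N <= a / (1 - z).
Proof.
move=> a0 z0 z1; rewrite geometric_seriesE ?lt_eqF //=.
apply: ler_wpM2r; first by rewrite invr_ge0 subr_ge0 ltW.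
by rewrite ler_piMr // gerBl exprn_ge0.
Qed.

Section discounted_value.
Variables (R : realType) (S A : finType) (X : Type) (pi : S -> S -> R)
  (zeta : X -> A -> S -> X) (beta : R).
Hypothesis pi_ge0 : forall s s', 0 <= pi s s'.
Hypothesis pi_sum1 : forall s, \sum_(s' : S) pi s s' = 1.
Hypothesis beta_ge0 : 0 <= beta.
Hypothesis beta_lt1 : beta < 1.
Variables (u : X -> A -> S -> R) (M : R).
Hypothesis u_le : forall x a s, `|u x a s| <= M.

Definition disc_term x0 s0 (a : seq S -> A) h n :=
  beta ^+ n * cexp pi s0 n
    (fun h' => u (state zeta x0 s0 a h') (a h') (head s0 h')) h.

Lemma disc_valueE x0 s0 a h :
  disc_value pi zeta beta x0 s0 a u h = limn (series (disc_term x0 s0 a h)).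
Proof. by []. Qed.

Lemma disc_term_norm_le x0 s0 a h n :
  `|disc_term x0 s0 a h n| <= geometric M beta n.
Proof.
rewrite /disc_term normrM ger0_norm ?exprn_ge0 //= mulrC.
by rewrite ler_wpM2r ?exprn_ge0 // cexp_norm_le.
Qed.

Lemma normed_series_disc_term_le x0 s0 a h N :
  [normed series (disc_term x0 s0 a h)] N <= M / (1 - beta).
Proof.
have M0 : 0 <= M by apply: le_trans (u_le x0 (a [::]) s0).
apply: le_trans (series_geometric_le N M0 beta_ge0 beta_lt1).
by apply: ler_sum => n _; apply: disc_term_norm_le.
Qed.

Lemma is_cvg_normed_disc_value x0 s0 a h :
  cvgn [normed series (disc_term x0 s0 a h)].
Proof.
apply: nondecreasing_is_cvgn.
  by apply: nondecreasing_series => n _ _; apply: normr_ge0.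
by exists (M / (1 - beta)) => _ [N _ <-]; apply: normed_series_disc_term_le.
Qed.

Lemma is_cvg_disc_value x0 s0 a h : cvgn (series (disc_term x0 s0 a h)).
Proof. exact/normed_cvg/is_cvg_normed_disc_value. Qed.

Lemma disc_value_norm_le x0 s0 a h :
  `|disc_value pi zeta beta x0 s0 a u h| <= M / (1 - beta).
Proof.
rewrite disc_valueE; apply: le_trans (lim_series_norm _) _.
  exact: is_cvg_normed_disc_value.
apply: limr_le; first exact: is_cvg_normed_disc_value.
by apply: nearW; apply: normed_series_disc_term_le.
Qed.

Lemma disc_value_rec x0 s0 a :
  disc_value pi zeta beta x0 s0 a u [::] =
  u x0 (a [::]) s0 + beta * \sum_(s' : S) pi s0 s' *
     disc_value pi zeta beta (zeta x0 (a [::]) s0) s' (shift_plan a s') u [::].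
Proof.
set x1 := zeta x0 (a [::]) s0.
have seriesS N : series (disc_term x0 s0 a [::]) N.+1 =
   u x0 (a [::]) s0 + beta * \sum_(s' : S) pi s0 s' *
       series (disc_term x1 s' (shift_plan a s') [::]) N.
  rewrite /series /= big_nat_recl //; congr (_ + _).
    by rewrite /disc_term /= expr0 mul1r.
  rewrite mulr_sumr; under [RHS]eq_bigr do rewrite mulrA mulr_sumr.
  rewrite [RHS]exchange_big /=; apply: eq_bigr => n _.
  rewrite /disc_term /= mulr_sumr; apply: eq_bigr => s' _.
  rewrite exprS -!mulrA; congr (_ * _); rewrite mulrCA; do 2 congr (_ * _).
  rewrite -[[:: s']]/([::] ++ [:: s']) cexp_shift; apply: eq_cexp => h'.
  by rewrite /shift_plan state_shift head_cat1.
rewrite disc_valueE; apply: cvg_lim => //; rewrite -cvg_shiftS.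
under eq_cvg do rewrite /= seriesS.
apply: cvgD; first exact: cvg_cst.
apply: cvgMl_tmp; apply: cvg_big => [|s' _]; first exact: add_continuous.
by apply: cvgMl_tmp; rewrite disc_valueE; apply: is_cvg_disc_value.
Qed.

End discounted_value.

Section sup_inf_image.
Variables (R : realType) (T : Type) (P : set T) (f : T -> R).

Lemma le_sup_image (B : R) :
  (forall t, P t -> f t <= B) -> forall t, P t -> f t <= sup (f @` P).
Proof.
move=> fB t Pt; apply: ub_le_sup; last by exists t.
by exists B => _ [u Pu <-]; apply: fB.
Qed.

Lemma sup_image_le (b : R) :
  P !=set0 -> (forall t, P t -> f t <= b) -> sup (f @` P) <= b.
Proof.
move=> [t0 Pt0] fb; apply: ge_sup; first by exists (f t0), t0.
by move=> _ [u Pu <-]; apply: fb.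
Qed.

Lemma ereal_sup_EFin_image (B : R) :
  P !=set0 -> (forall t, P t -> f t <= B) ->
  ereal_sup [set (f t)%:E | t in P] = (sup (f @` P))%:E.
Proof.
move=> [t0 Pt0] fB; rewrite -ereal_sup_EFin ?image_comp //.
- by exists B => _ [u Pu <-]; apply: fB.
- by exists (f t0), t0.
Qed.

Lemma inf_image_le (B : R) :
  (forall t, P t -> B <= f t) -> forall t, P t -> inf (f @` P) <= f t.
Proof.
move=> fB t Pt; apply: ge_inf; last by exists t.
by exists B => _ [u Pu <-]; apply: fB.
Qed.

Lemma le_inf_image (b : R) :
  P !=set0 -> (forall t, P t -> b <= f t) -> b <= inf (f @` P).
Proof.
move=> [t0 Pt0] fb; apply: lb_le_inf; first by exists (f t0), t0.
by move=> _ [u Pu <-]; apply: fb.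
Qed.

Lemma ereal_inf_EFin_image (B : R) :
  P !=set0 -> (forall t, P t -> B <= f t) ->
  ereal_inf [set (f t)%:E | t in P] = (inf (f @` P))%:E.
Proof.
move=> [t0 Pt0] fB; rewrite -ereal_inf_EFin ?image_comp //.
- by exists B => _ [u Pu <-]; apply: fB.
- by exists (f t0), t0.
Qed.

End sup_inf_image.

Lemma supnorm_ge0 (R : realType) (S A X : Type) (f : X -> A -> S -> R) :
  0 <= supnorm f.
Proof.
rewrite /supnorm; set E := _ @` _.
have [[[y Ey] ubE]|/sup_out-> //] := pselect (has_sup E).
by apply: le_trans (ub_le_sup ubE Ey); case: Ey => t _ <-.
Qed.

Lemma normr_le_supnorm (R : realType) (S A X : Type) (f : X -> A -> S -> R) :
  (exists M : R, forall x a s, `|f x a s| <= M) ->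
  forall x a s, `|f x a s| <= supnorm f.
Proof.
move=> [M fM] x a s; apply: ub_le_sup; last by exists (x, a, s).
by exists M => _ [t _ <-]; apply: fM.
Qed.

Lemma Lconst_ge0 (R : realType) (S A X : Type) (I : nat)
    (r : X -> A -> S -> R) (g : 'I_I -> X -> A -> S -> R) (beta : R) :
  beta < 1 -> 0 <= Lconst r g beta.
Proof.
move=> beta_lt1; apply: divr_ge0; last by rewrite subr_ge0 ltW.
apply: addr_ge0; first exact: supnorm_ge0.
by apply: sumr_ge0 => i _; apply: supnorm_ge0.
Qed.

Lemma ler_sum_nonneg (R : numDomainType) (I : nat) (f : 'I_I -> R) j :
  (forall i, 0 <= f i) -> f j <= \sum_(i < I) f i.
Proof. by move=> f0; rewrite (bigD1 j) //= lerDl; apply: sumr_ge0 => i _. Qed.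

(* Equivalently, [(k + 1) / 2^k <= 2 (3/4)^k]. *)
Lemma natS_le_three_halves_exp (R : realFieldType) k :
  (k.+1%:R : R) <= 2 * (3 / 2) ^+ k.
Proof.
elim: k => [|k IH]; first by rewrite expr0 mulr1 ler1n.
have e1 : 1 <= (3 / 2 : R) ^+ k by rewrite exprn_ege1 // ler_pdivlMr; lra.
by rewrite -natr1 exprS; lra.
Qed.

Lemma nneseries_EFin_le (R : realType) (u : nat -> R) N0 (B : R) :
  (forall k, 0 <= u k) -> (forall N, \sum_(N0 <= k < N) u k <= B) ->
  (\sum_(N0 <= k <oo) (u k)%:E <= B%:E)%E.
Proof.
move=> u0 uB; apply: lime_le.
  by apply: is_cvg_nneseries => n _ _; rewrite lee_fin.
by apply: nearW => N; rewrite sumEFin lee_fin.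
Qed.

Lemma esum_pickle_half_le (R : realType) (X : countType) (c : R) : 0 <= c ->
  (\esum_(x in [set: X]) ((2^-1 ^+ (pickle x).+1 * c)%:E) <= c%:E)%E.
Proof.
move=> c0.
have term_ge0 n : 0 <= (2^-1 : R) ^+ n.+1 * c by rewrite mulr_ge0 ?exprn_ge0.
have pickle_inj : set_inj [set: X] pickle by move=> a b _ _ /(pcan_inj pickleK).
rewrite -(esum_image _ _ (fun j => ((2^-1 ^+ j.+1 * c)%:E)) pickle_inj) /=.
apply: (@le_trans _ _ (\esum_(j in [set: nat]) ((2^-1 ^+ j.+1 * c)%:E))).
  rewrite [leLHS]esum_mkcond [leRHS]esum_mkcond; apply: le_esum => j _.
  by rewrite in_setT; case: ifP => // _; rewrite lee_fin.
rewrite -nneseries_esumT => [|n]; last by rewrite lee_fin.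
apply: nneseries_EFin_le => // N.
have -> : \sum_(0 <= j < N) 2^-1 ^+ j.+1 * c =
    series (geometric (2^-1 * c) 2^-1) N.
  by apply: eq_bigr => j _; rewrite /= exprS; ring.
apply: le_trans (series_geometric_le _ _ _ _) _; rewrite ?mulr_ge0 //; try lra.
by rewrite (_ : 1 - 2^-1 = 2^-1 :> R) ?mulfK //; lra.
Qed.

Lemma ballB_sum_le (R : realType) (I k : nat) (gam : 'I_I -> R) :
  ballB k gam -> \sum_(i < I) gam i <= I%:R * k%:R.
Proof.
move=> [_ gam_le]; apply: le_trans (ler_sum _ (fun i _ => gam_le i)) _.
by rewrite sumr_const card_ord mulr_natl.
Qed.

Lemma weighted_series_le (R : realFieldType) (n : nat) (c : R) N : 0 <= c ->
  \sum_(1 <= k < N) 2^-1 ^+ k * ((1 + n%:R * k%:R) * c) <= 8 * (1 + n%:R) * c.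
Proof.
move=> c0; set b := 2 * (1 + n%:R) * c.
have b0 : 0 <= b by rewrite !mulr_ge0 // addr_ge0.
have term k : 2^-1 ^+ k * ((1 + n%:R * k%:R) * c) <= geometric b (3 / 4) k.
  have q0 : 0 <= (2^-1 : R) ^+ k by rewrite exprn_ge0.
  have n0 : (0 : R) <= n%:R by [].
  have k0 : (0 : R) <= k%:R by [].
  have nk : 1 + n%:R * k%:R <= (1 + n%:R) * k.+1%:R :> R.
    by rewrite -natr1; have := mulr_ge0 n0 k0; lra.
  have := ler_wpM2l (mulr_ge0 q0 c0) nk.
  have := ler_wpM2l (mulr_ge0 (mulr_ge0 q0 c0) (addr_ge0 ler01 n0))
    (natS_le_three_halves_exp R k).
  rewrite /= /b (_ : 3 / 4 = 2^-1 * (3 / 2) :> R) ?exprMn; last lra.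
  lra.
apply: (@le_trans _ _ (series (geometric b (3 / 4)) N)).
  case: N => [|N]; first by rewrite /series /= !big_geq.
  rewrite /series /= [leRHS](@big_cat_nat _ _ _ 1) //= big_nat1 ler_wpDl //.
    exact: geometric_ge0.
  by apply: ler_sum => k _; apply: term.
apply: le_trans (series_geometric_le _ b0 _ _) _; try lra.
by rewrite /b (_ : 1 - 3 / 4 = 4^-1 :> R) ?invrK; lra.
Qed.

Section bellman_operator.
Variables (R : realType) (S A : finType) (X : countType) (I : nat)
  (pi : S -> S -> R) (zeta : X -> A -> S -> X) (p r : X -> A -> S -> R)
  (g : 'I_I -> X -> A -> S -> R) (gbar : 'I_I -> R) (beta : R)
  (F : ('I_I -> R) -> X -> S -> R).
Hypothesis pi_gt0 : forall s s', 0 < pi s s'.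
Hypothesis pi_sum1 : forall s, \sum_(s' : S) pi s s' = 1.
Hypothesis r_bounded : exists M : R, forall x a s, `|r x a s| <= M.
Hypothesis g_bounded : forall i, exists M : R, forall x a s, `|g i x a s| <= M.
Hypothesis beta_gt0 : 0 < beta.
Hypothesis beta_lt1 : beta < 1.
Hypothesis feasible_ex :
  forall x0 s0, exists a, feasible pi zeta p g gbar beta x0 s0 a.
Hypothesis F_in_N : inN pi zeta p r g gbar beta F.

Let pi_ge0 s s' : 0 <= pi s s'. Proof. exact: ltW. Qed.
Let beta_ge0 : 0 <= beta. Proof. exact: ltW. Qed.
Let L := Lconst r g beta.
Let L_ge0 : 0 <= L. Proof. exact: Lconst_ge0. Qed.

Let r_le x a s : `|r x a s| <= supnorm r.
Proof. exact: normr_le_supnorm. Qed.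

Let g_le i x a s : `|g i x a s| <= supnorm (g i).
Proof. exact: normr_le_supnorm. Qed.

Lemma Lconst_numer :
  supnorm r + \sum_(i < I) supnorm (g i) = (1 - beta) * L.
Proof. by rewrite /L /Lconst mulrC divfK // subr_eq0 gt_eqF. Qed.

Lemma g_le_Lconst i x a s : `|g i x a s| <= (1 - beta) * L.
Proof.
rewrite -Lconst_numer; apply: le_trans (g_le i x a s) _.
apply: le_trans (ler_sum_nonneg (f := fun j => supnorm (g j)) i _) _.
  by move=> j; apply: supnorm_ge0.
by rewrite lerDr supnorm_ge0.
Qed.

Lemma weighted_supnorm_le (c : 'I_I -> R) : nonneg c ->
  supnorm r + \sum_(i < I) c i * supnorm (g i)
  <= (1 + \sum_(i < I) c i) * ((1 - beta) * L).
Proof.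
move=> c0; rewrite -Lconst_numer mulrDl mul1r lerD ?lerDl //.
- by apply: sumr_ge0 => i _; apply: supnorm_ge0.
- rewrite mulrDr ler_wpDl //.
    by apply: mulr_ge0; [apply: sumr_ge0 => i _ | apply: supnorm_ge0].
  rewrite mulr_suml; apply: ler_sum => i _; apply: ler_wpM2l => //.
  by apply: ler_sum_nonneg => j; apply: supnorm_ge0.
Qed.

Definition plan_value (gam : 'I_I -> R) x s (a : seq S -> A) : R :=
  disc_value pi zeta beta x s a r [::]
  + \sum_(i < I) gam i * disc_value pi zeta beta x s a (g i) [::].

Definition lagrangian (gam lam : 'I_I -> R) x s a : R :=
  r x a s + \sum_(i < I) (gam i * g i x a s + lam i * (g i x a s - gbar i))
  + beta * \sum_(s' : S) pi s s' * F (fun i => gam i + lam i) (zeta x a s) s'.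

Definition admissible x s : set A := [set a | 0 <= p x a s].

Definition lagrangian_max gam lam x s : R :=
  sup (lagrangian gam lam x s @` admissible x s).

Definition bellman gam x s : R :=
  inf ((fun lam => lagrangian_max gam lam x s) @` @nonneg R I).

Lemma nonneg0 : nonneg (fun _ : 'I_I => 0 : R).
Proof. by move=> i. Qed.

Lemma nonnegD (u v : 'I_I -> R) :
  nonneg u -> nonneg v -> nonneg (fun i => u i + v i).
Proof. by move=> u0 v0 i; rewrite addr_ge0. Qed.

Lemma nonneg_conv (u v : 'I_I -> R) t : nonneg u -> nonneg v ->
  0 <= t -> t <= 1 -> nonneg (fun i => t * u i + (1 - t) * v i).
Proof. by move=> u0 v0 t0 t1 i; rewrite addr_ge0 // mulr_ge0 // subr_ge0. Qed.

Lemma admissible_neq0 x s : admissible x s !=set0.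
Proof.
by have [a [p_ge0 _]] := feasible_ex x s; exists (a [::]); exact: (p_ge0 [::]).
Qed.

Lemma lagrangian_le_sum gam lam x s a :
  lagrangian gam lam x s a <= \sum_(a' : A) `|lagrangian gam lam x s a'|.
Proof.
apply: le_trans (ler_norm _) _; rewrite (bigD1 a) //= lerDl.
by apply: sumr_ge0 => *; apply: normr_ge0.
Qed.

Lemma le_lagrangian_max gam lam x s a :
  admissible x s a -> lagrangian gam lam x s a <= lagrangian_max gam lam x s.
Proof. by apply: le_sup_image => t _; apply: lagrangian_le_sum. Qed.

Lemma lagrangian_max_le gam lam x s b :
  (forall a, admissible x s a -> lagrangian gam lam x s a <= b) ->
  lagrangian_max gam lam x s <= b.
Proof. exact/sup_image_le/admissible_neq0. Qed.

Lemma ereal_sup_lagrangian gam lam x s :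
  ereal_sup [set (lagrangian gam lam x s a)%:E | a in admissible x s] =
  (lagrangian_max gam lam x s)%:E.
Proof.
apply: ereal_sup_EFin_image (admissible_neq0 x s) _ => t _.
exact: lagrangian_le_sum.
Qed.

(* Feasibility makes the multiplier terms [lam i * (v^i - gbar i)] nonnegative,
   and property (iii) of [F] bounds the continuation values. *)
Lemma plan_value_le_lagrangian gam lam x s al : nonneg gam -> nonneg lam ->
  feasible pi zeta p g gbar beta x s al ->
  plan_value gam x s al <= lagrangian gam lam x s (al [::]).
Proof.
move=> gam0 lam0 feas.
set a0 := al [::]; set x1 := zeta x a0 s; set gl := fun i => gam i + lam i.
pose V u s' := disc_value pi zeta beta x1 s' (shift_plan al s') u [::].
pose v u := disc_value pi zeta beta x s al u [::].
have v_rec u : (exists M : R, forall x a s, `|u x a s| <= M) ->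
    v u = u x a0 s + beta * \sum_(s' : S) pi s s' * V u s'.
  move=> [M uM].
  exact: (disc_value_rec zeta pi_ge0 pi_sum1 beta_ge0 beta_lt1 uM).
have cont s' : plan_value gl x1 s' (shift_plan al s') <= F gl x1 s'.
  have [_ _ F_ge _] := F_in_N.2 x1 s'.
  by apply: F_ge; [apply: feasible_shift | apply: nonnegD].
have slack i : 0 <= lam i * (v (g i) - gbar i).
  by rewrite mulr_ge0 // subr_ge0; apply: feas.2.
have swap : \sum_(s' : S) pi s s' * plan_value gl x1 s' (shift_plan al s') =
    \sum_(s' : S) pi s s' * V r s' +
    \sum_(i < I) gl i * \sum_(s' : S) pi s s' * V (g i) s'.
  under eq_bigr do rewrite mulrDr; rewrite big_split /=; congr (_ + _).
  under eq_bigr do rewrite mulr_sumr.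
  rewrite exchange_big /=; apply: eq_bigr => i _; rewrite mulr_sumr.
  by apply: eq_bigr => s' _; rewrite mulrCA.
have expand : plan_value gam x s al + \sum_(i < I) lam i * (v (g i) - gbar i) =
    r x a0 s + \sum_(i < I) (gam i * g i x a0 s + lam i * (g i x a0 s - gbar i))
    + beta * \sum_(s' : S) pi s s' * plan_value gl x1 s' (shift_plan al s').
  have sums : \sum_(i < I) gam i * v (g i)
      + \sum_(i < I) lam i * (v (g i) - gbar i) =
      \sum_(i < I) (gam i * g i x a0 s + lam i * (g i x a0 s - gbar i)) +
      beta * \sum_(i < I) gl i * \sum_(s' : S) pi s s' * V (g i) s'.
    rewrite mulr_sumr -!big_split /=; apply: eq_bigr => i _.
    by rewrite (v_rec _ (g_bounded i)) /gl; ring.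
  by rewrite /plan_value -addrA sums -/(v r) (v_rec r r_bounded) swap; ring.
apply: le_trans (_ : _ <= plan_value gam x s al +
    \sum_(i < I) lam i * (v (g i) - gbar i)) _.
  by rewrite lerDl; apply: sumr_ge0 => i _; apply: slack.
rewrite expand /lagrangian lerD2l; apply: ler_wpM2l => //.
by apply: ler_sum => s' _; apply: ler_wpM2l; [apply: pi_ge0 | apply: cont].
Qed.

Lemma plan_value_le_lagrangian_max gam lam x s al : nonneg gam -> nonneg lam ->
  feasible pi zeta p g gbar beta x s al ->
  plan_value gam x s al <= lagrangian_max gam lam x s.
Proof.
move=> gam0 lam0 feas.
apply: le_trans (plan_value_le_lagrangian gam0 lam0 feas) _.
by apply: le_lagrangian_max; exact: (feas.1 [::]).
Qed.

Lemma bellman_le gam lam x s : nonneg gam -> nonneg lam ->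
  bellman gam x s <= lagrangian_max gam lam x s.
Proof.
move=> gam0 lam0; have [al feas] := feasible_ex x s.
apply: (inf_image_le (B := plan_value gam x s al)) lam0 => l l0.
exact: plan_value_le_lagrangian_max.
Qed.

Lemma le_bellman gam x s b :
  (forall lam, nonneg lam -> b <= lagrangian_max gam lam x s) ->
  b <= bellman gam x s.
Proof. by apply: le_inf_image; exists (fun _ => 0); apply: nonneg0. Qed.

Lemma BopE gam x s : nonneg gam ->
  Bop pi zeta p r g gbar beta F gam x s = (bellman gam x s)%:E.
Proof.
move=> gam0; have [al feas] := feasible_ex x s.
transitivity
  (ereal_inf [set (lagrangian_max gam lam x s)%:E | lam in @nonneg R I]).
  by congr ereal_inf; apply: eq_imagel => lam _; apply: ereal_sup_lagrangian.
apply: (ereal_inf_EFin_image (B := plan_value gam x s al)).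
  by exists (fun _ => 0); apply: nonneg0.
by move=> l l0; apply: plan_value_le_lagrangian_max.
Qed.

Lemma plan_value_le_bellman gam x s al : nonneg gam ->
  feasible pi zeta p g gbar beta x s al ->
  plan_value gam x s al <= bellman gam x s.
Proof.
move=> gam0 feas; apply: le_bellman => lam lam0.
exact: plan_value_le_lagrangian_max.
Qed.

Lemma bellman_le_bound gam x s : nonneg gam ->
  bellman gam x s <= (1 + \sum_(i < I) gam i) * L.
Proof.
move=> gam0; apply: le_trans (bellman_le x s gam0 nonneg0) _.
apply: lagrangian_max_le => a _; rewrite /lagrangian.
have -> : (fun i => gam i + 0) = gam by apply/funext => i; rewrite addr0.
have EF : \sum_(s' : S) pi s s' * F gam (zeta x a s) s'
    <= (1 + \sum_(i < I) gam i) * L.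
  rewrite -[leRHS]mul1r -{1}(pi_sum1 s) mulr_suml; apply: ler_sum => s' _.
  have [_ _ _ F_le] := F_in_N.2 (zeta x a s) s'.
  by apply: ler_wpM2l => //; apply: F_le.
have current :
    r x a s + \sum_(i < I) (gam i * g i x a s + 0 * (g i x a s - gbar i))
    <= (1 + \sum_(i < I) gam i) * ((1 - beta) * L).
  apply: le_trans (weighted_supnorm_le gam0); apply: lerD.
    exact: le_trans (ler_norm _) (r_le x a s).
  apply: ler_sum => i _; rewrite mul0r addr0; apply: ler_wpM2l => //.
  exact: le_trans (ler_norm _) (g_le i x a s).
have := ler_wpM2l beta_ge0 EF; lra.
Qed.

Lemma lagrangian_lipschitz g1 g2 lam x s a :
  nonneg g1 -> nonneg g2 -> nonneg lam ->
  lagrangian g1 lam x s a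
  <= lagrangian g2 lam x s a + L * \sum_(i < I) `|g1 i - g2 i|.
Proof.
move=> g1_0 g2_0 lam0; set D := \sum_(i < I) `|g1 i - g2 i|.
have F_lip s' : F (fun i => g1 i + lam i) (zeta x a s) s'
    <= F (fun i => g2 i + lam i) (zeta x a s) s' + L * D.
  have [_ F_lip _ _] := F_in_N.2 (zeta x a s) s'.
  have := F_lip _ _ (nonnegD g1_0 lam0) (nonnegD g2_0 lam0).
  under eq_bigr do rewrite opprD addrACA subrr addr0.
  by rewrite ler_norml => /andP[_]; rewrite lerBlDl addrC.
have EF : \sum_(s' : S) pi s s' * F (fun i => g1 i + lam i) (zeta x a s) s'
    <= \sum_(s' : S) pi s s' * F (fun i => g2 i + lam i) (zeta x a s) s'
       + L * D.
  rewrite -[X in _ <= _ + X]mul1r -{1}(pi_sum1 s) mulr_suml -big_split /=.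
  by apply: ler_sum => s' _; rewrite -mulrDr; apply: ler_wpM2l.
have current :
    \sum_(i < I) (g1 i * g i x a s + lam i * (g i x a s - gbar i))
    <= \sum_(i < I) (g2 i * g i x a s + lam i * (g i x a s - gbar i))
       + (1 - beta) * L * D.
  rewrite /D mulr_sumr -big_split /=; apply: ler_sum => i _.
  have : (g1 i - g2 i) * g i x a s <= (1 - beta) * L * `|g1 i - g2 i|.
    rewrite mulrC; apply: le_trans (ler_norm _) _.
    by rewrite normrM ler_wpM2r ?g_le_Lconst.
  lra.
have := ler_wpM2l beta_ge0 EF; rewrite /lagrangian; lra.
Qed.

Lemma bellman_lipschitz1 g1 g2 x s : nonneg g1 -> nonneg g2 ->
  bellman g1 x s <= bellman g2 x s + L * \sum_(i < I) `|g1 i - g2 i|.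
Proof.
move=> g1_0 g2_0; rewrite -lerBlDr; apply: le_bellman => lam lam0.
rewrite lerBlDr; apply: le_trans (bellman_le x s g1_0 lam0) _.
apply: lagrangian_max_le => a adm.
apply: le_trans (lagrangian_lipschitz x s a g1_0 g2_0 lam0) _.
by rewrite lerD2r; apply: le_lagrangian_max.
Qed.

Lemma bellman_lipschitz g1 g2 x s : nonneg g1 -> nonneg g2 ->
  `|bellman g1 x s - bellman g2 x s| <= L * \sum_(i < I) `|g1 i - g2 i|.
Proof.
move=> g1_0 g2_0; have := bellman_lipschitz1 x s g2_0 g1_0.
under eq_bigr do rewrite distrC.
by have := bellman_lipschitz1 x s g1_0 g2_0; rewrite ler_norml; lra.
Qed.

Lemma bellman_approx gam x s e : nonneg gam -> 0 < e ->
  exists2 lam, nonneg lam & lagrangian_max gam lam x s <= bellman gam x s + e.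
Proof.
move=> gam0 e0.
have [//|no_lam] := pselect (exists2 lam, nonneg lam &
  lagrangian_max gam lam x s <= bellman gam x s + e).
suff : bellman gam x s + e <= bellman gam x s by lra.
apply: le_bellman => lam lam0; rewrite leNgt; apply/negP => lt_lam.
by apply: no_lam; exists lam => //; apply: ltW.
Qed.

Lemma lagrangian_convex g1 g2 l1 l2 t x s a :
  nonneg g1 -> nonneg g2 -> nonneg l1 -> nonneg l2 -> 0 <= t -> t <= 1 ->
  lagrangian (fun i => t * g1 i + (1 - t) * g2 i)
             (fun i => t * l1 i + (1 - t) * l2 i) x s a
  <= t * lagrangian g1 l1 x s a + (1 - t) * lagrangian g2 l2 x s a.
Proof.
move=> g1_0 g2_0 l1_0 l2_0 t0 t1; rewrite /lagrangian.
have -> : (fun i => t * g1 i + (1 - t) * g2 i + (t * l1 i + (1 - t) * l2 i)) =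
    (fun i => t * (g1 i + l1 i) + (1 - t) * (g2 i + l2 i)).
  by apply/funext => i; ring.
set F1 := fun s' => F (fun i => g1 i + l1 i) (zeta x a s) s'.
set F2 := fun s' => F (fun i => g2 i + l2 i) (zeta x a s) s'.
have EF : \sum_(s' : S) pi s s' *
      F (fun i => t * (g1 i + l1 i) + (1 - t) * (g2 i + l2 i)) (zeta x a s) s'
    <= t * \sum_(s' : S) pi s s' * F1 s'
       + (1 - t) * \sum_(s' : S) pi s s' * F2 s'.
  rewrite !mulr_sumr -big_split /=; apply: ler_sum => s' _.
  have [F_cvx _ _ _] := F_in_N.2 (zeta x a s) s'.
  have := F_cvx _ _ _ (nonnegD g1_0 l1_0) (nonnegD g2_0 l2_0) t0 t1.
  by move=> /(ler_wpM2l (pi_ge0 s s')); rewrite /F1 /F2; lra.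
have current : \sum_(i < I) ((t * g1 i + (1 - t) * g2 i) * g i x a s
      + (t * l1 i + (1 - t) * l2 i) * (g i x a s - gbar i))
   = t * \sum_(i < I) (g1 i * g i x a s + l1 i * (g i x a s - gbar i))
     + (1 - t) * \sum_(i < I) (g2 i * g i x a s + l2 i * (g i x a s - gbar i)).
  by rewrite !mulr_sumr -big_split /=; apply: eq_bigr => i _; ring.
by rewrite current; have := ler_wpM2l beta_ge0 EF; lra.
Qed.

(* An infimum over lambda of maxima over a of a function jointly convex in
   (gamma, lambda) is convex in gamma: approximate both infima within e. *)
Lemma bellman_convex g1 g2 t x s :
  nonneg g1 -> nonneg g2 -> 0 <= t -> t <= 1 ->
  bellman (fun i => t * g1 i + (1 - t) * g2 i) x s
  <= t * bellman g1 x s + (1 - t) * bellman g2 x s.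
Proof.
move=> g1_0 g2_0 t0 t1; apply/ler_addgt0Pr => e e0.
have [l1 l1_0 le1] := bellman_approx x s g1_0 e0.
have [l2 l2_0 le2] := bellman_approx x s g2_0 e0.
apply: le_trans (bellman_le x s (nonneg_conv g1_0 g2_0 t0 t1)
                               (nonneg_conv l1_0 l2_0 t0 t1)) _.
have : lagrangian_max (fun i => t * g1 i + (1 - t) * g2 i)
                      (fun i => t * l1 i + (1 - t) * l2 i) x s
    <= t * lagrangian_max g1 l1 x s + (1 - t) * lagrangian_max g2 l2 x s.
  apply: lagrangian_max_le => a adm.
  apply: le_trans (lagrangian_convex x s a g1_0 g2_0 l1_0 l2_0 t0 t1) _.
  have t1' : 0 <= 1 - t by rewrite subr_ge0.
  by apply: lerD; apply: ler_wpM2l => //; apply: le_lagrangian_max.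
have t1' : 0 <= 1 - t by rewrite subr_ge0.
have := ler_wpM2l t0 le1; have := ler_wpM2l t1' le2; lra.
Qed.

Lemma plan_value_norm_le gam x s al : nonneg gam ->
  `|plan_value gam x s al| <= (1 + \sum_(i < I) gam i) * L.
Proof.
move=> gam0.
have dv_le u M : (forall x a s, `|u x a s| <= M) ->
    `|disc_value pi zeta beta x s al u [::]| <= M / (1 - beta).
  move=> uM.
  exact: (disc_value_norm_le zeta pi_ge0 pi_sum1 beta_ge0 beta_lt1 uM).
have total : (supnorm r + \sum_(i < I) gam i * supnorm (g i)) / (1 - beta)
    <= (1 + \sum_(i < I) gam i) * L.
  rewrite ler_pdivrMr ?subr_gt0 // -mulrA [L * _]mulrC.
  exact: weighted_supnorm_le.
apply: le_trans total; rewrite mulrDl mulr_suml.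
apply: le_trans (ler_normD _ _) (lerD (dv_le _ _ r_le) _).
apply: le_trans (ler_norm_sum _ _ _) (ler_sum _ _) => i _.
by rewrite normrM ger0_norm // -mulrA ler_wpM2l //; apply: dv_le (g_le i).
Qed.

Lemma bellman_norm_le gam x s : nonneg gam ->
  `|bellman gam x s| <= (1 + \sum_(i < I) gam i) * L.
Proof.
move=> gam0; have [al feas] := feasible_ex x s.
rewrite ler_norml bellman_le_bound // andbT.
have := plan_value_norm_le x s al gam0; rewrite ler_norml => /andP[lb _].
exact: le_trans lb (plan_value_le_bellman gam0 feas).
Qed.

Lemma inM_bellman :
  inM (fun gam x s => fine (Bop pi zeta p r g gbar beta F gam x s)).
Proof.
set C := 8 * (1 + I%:R) * L.
have C0 : 0 <= C.
  by apply: mulr_ge0 => //; apply: mulr_ge0 => //; apply: addr_ge0.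
set Esup := fun x s k => ereal_sup
  [set (`|fine (Bop pi zeta p r g gbar beta F gam x s)|)%:E
  | gam in @ballB R I k].
have Esup_le x s k : (Esup x s k <= ((1 + I%:R * k%:R) * L)%:E)%E.
  apply: ge_ereal_sup => _ [gam [gam0 gam_le] <-].
  rewrite BopE // lee_fin; apply: le_trans (bellman_norm_le x s gam0) _.
  by rewrite ler_wpM2r // lerD2l ballB_sum_le.
have Esup_ge0 x s k : (0 <= Esup x s k)%E.
  apply: (@le_trans _ _
    (`|fine (Bop pi zeta p r g gbar beta F (fun _ => 0) x s)|)%:E).
    by rewrite lee_fin.
  apply: ereal_sup_ubound; exists (fun _ => 0) => //.
  by split=> // i; apply: ler0n.
have k_series x s :
    (\sum_(1 <= k <oo) ((2^-1 ^+ k)%:E * Esup x s k) <= C%:E)%E.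
  apply: (@le_trans _ _ (\sum_(1 <= k <oo)
      ((2^-1 ^+ k * ((1 + I%:R * k%:R) * L))%:E))%E).
    apply: lee_nneseries => [k _ _|k _]; first by rewrite mule_ge0 ?lee_fin.
    by rewrite EFinM lee_wpmul2l ?lee_fin //; apply: Esup_le.
  apply: nneseries_EFin_le => [k|N]; last exact: weighted_series_le.
  by rewrite mulr_ge0 ?exprn_ge0 // mulr_ge0 // addr_ge0 // mulr_ge0.
have x_series s : (\esum_(x in [set: X]) ((2^-1 ^+ (pickle x).+1)%:E *
    \sum_(1 <= k <oo) ((2^-1 ^+ k)%:E * Esup x s k)) <= C%:E)%E.
  apply: le_trans (esum_pickle_half_le X C0).
  apply: le_esum => x _.
  by rewrite EFinM lee_wpmul2l ?lee_fin //; apply: k_series.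
rewrite /inM /normM; apply: (@le_lt_trans _ _ (\sum_(s : S)
    ((2^-1 ^+ (enum_rank s).+1 * C)%:E))%E); last by rewrite sumEFin ltry.
apply: lee_sum => s _.
by rewrite EFinM lee_wpmul2l ?lee_fin //; apply: x_series.
Qed.

End bellman_operator.

Theorem lemma3p5 (R : realType) (S A : finType) (X : countType) (I : nat)
    (pi : S -> S -> R) (zeta : X -> A -> S -> X) (p r : X -> A -> S -> R)
    (g : 'I_I -> X -> A -> S -> R) (gbar : 'I_I -> R) (beta : R) :
  (forall s s' : S, 0 < pi s s') ->
  (forall s : S, \sum_(s' : S) pi s s' = 1) ->
  (exists M : R, forall x a s, `|r x a s| <= M) ->
  (forall i, exists M : R, forall x a s, `|g i x a s| <= M) ->
  0 < beta -> beta < 1 ->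
  (forall (x0 : X) (s0 : S), exists a : seq S -> A,
      feasible pi zeta p g gbar beta x0 s0 a) ->
  forall F : ('I_I -> R) -> X -> S -> R,
  inN pi zeta p r g gbar beta F ->
  (forall (gam : 'I_I -> R) (x : X) (s : S), nonneg gam ->
      Bop pi zeta p r g gbar beta F gam x s \is a fin_num) /\
  inN pi zeta p r g gbar beta
    (fun gam x s => fine (Bop pi zeta p r g gbar beta F gam x s)).
Proof.
move=> pi_gt0 pi_sum1 r_bd g_bd beta_gt0 beta_lt1 feas F F_in_N.
have BE := BopE pi_gt0 pi_sum1 r_bd g_bd beta_gt0 beta_lt1 feas F_in_N.
split=> [gam x s gam0|]; first by rewrite BE.
split; first by apply: inM_bellman.
move=> x s; split.
- move=> g1 g2 t g1_0 g2_0 t0 t1.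
  have mix0 := nonneg_conv g1_0 g2_0 t0 t1.
  by rewrite !BE //=; apply: bellman_convex.
- by move=> g1 g2 g1_0 g2_0; rewrite !BE //=; apply: bellman_lipschitz.
- by move=> a gam feas_a gam0; rewrite BE //=; apply: plan_value_le_bellman.
- by move=> gam gam0; rewrite BE //=; apply: bellman_le_bound.
Qed.
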